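(* Let $T$ be a tree with a vertex of degree $d$. For any $s\ge 1$, any straight-line drawing of $T$ with spanning ratio at most $s$ has edge-length ratio in $2^{\Omega(d/s^2)}$.
   Context: A straight-line drawing maps vertices to distinct points and edges to straight-line segments. In a straight-line drawing $\Gamma$, $\pi_\Gamma(u,v)$ is the minimum total Euclidean length of a path between $u$ and $v$, $\|uv\|_\Gamma$ is their Euclidean distance, and the spanning ratio is $\max_{u\neq v}\pi_\Gamma(u,v)/\|uv\|_\Gamma$. The edge-length ratio is the ratio between the lengths of the longest and shortest edges. The $\Omega$ notation hides an absolute constant (independent of $T$, $d$, $s$). *)

From HB Require Import structures.
From mathcomp Require Import all_boot all_order all_algebra.
From mathcomp Require Import reals exp.
Set Implicit Arguments. Unset Strict Implicit. Unset Printing Implicit Defensive.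
Import Order.TTheory GRing.Theory Num.Theory.
Local Open Scope ring_scope.

Section Drawings.
Variable R : realType.
Variable V : finType.

Definition simple_graph (e : rel V) : Prop :=
  symmetric e /\ irreflexive e.

Definition is_tree (e : rel V) : Prop :=
  [/\ simple_graph e,
      (forall u v : V, connect e u v) &
      (forall p : seq V, uniq p -> (3 <= size p)%N -> ~~ cycle e p)].

Definition degree (e : rel V) (v : V) : nat := #|[set u | e v u]|.

Definition point := (R * R)%type.
Definition dist (p q : point) : R :=
  Num.sqrt ((p.1 - q.1) ^+ 2 + (p.2 - q.2) ^+ 2).

Definition straight_line_drawing (P : V -> point) : Prop := injective P.

Fixpoint walk_len (P : V -> point) (x : V) (p : seq V) : R :=
  match p with
  | [::] => 0
  | y :: q => dist (P x) (P y) + walk_len P y q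
  end.

(* Spanning ratio of the drawing is at most s:
   for all u <> v, pi(u,v) <= s * ||uv||, where pi(u,v) is the minimum
   length of a u-v path in the graph (the minimum is attained, so this
   says some u-v path has length <= s * ||uv||). *)
Definition spanning_ratio_le (e : rel V) (P : V -> point) (s : R) : Prop :=
  forall u v : V, u != v ->
    exists p : seq V, [/\ path e u p, last u p = v &
                          walk_len P u p <= s * dist (P u) (P v)].

Definition edge_len (P : V -> point) (x : V * V) : R := dist (P x.1) (P x.2).

Definition max_edge_len (e : rel V) (P : V -> point) : R :=
  \big[Num.max/0]_(x : V * V | e x.1 x.2) edge_len P x.

Definition min_edge_len (e : rel V) (P : V -> point) : R :=
  \big[Num.min/max_edge_len e P]_(x : V * V | e x.1 x.2) edge_len P x.

Definition edge_length_ratio (e : rel V) (P : V -> point) : R :=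
  max_edge_len e P / min_edge_len e P.

End Drawings.

From HB Require Import structures.
From mathcomp Require Import all_boot all_order all_algebra.
From mathcomp Require Import reals exp.
From mathcomp Require Import ring lra.
Set Implicit Arguments. Unset Strict Implicit. Unset Printing Implicit Defensive.
Import Order.TTheory GRing.Theory Num.Theory.
Local Open Scope ring_scope.

(* Let m and M be the shortest and longest edge lengths.  Every neighbour u of
   the vertex v lies at distance between m and M from v, hence in one of about
   log2 (M / m) dyadic shells 2^j m <= |vu| < 2^(j+1) m.  As T is a tree, the
   path between two neighbours u1, u2 goes through v, so the spanning ratio
   gives |vu1| + |vu2| <= s |u1u2|: two neighbours in shell j are at least
   2^(j+1) m / s apart.  A grid of O(s^2) square cells of side 2^j m / s covers
   the disc of radius 2^(j+1) m around v and each cell contains at most one of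
   them.  Hence d = O(s^2 log (M / m)), i.e. M / m >= 2^(Omega(d / s^2)). *)

Section EuclideanDistance.
Variable R : realType.
Implicit Types p q r : point R.

Lemma dist_ge0 p q : 0 <= dist p q.
Proof. exact: sqrtr_ge0. Qed.

Lemma sqr_dist p q : dist p q ^+ 2 = (p.1 - q.1) ^+ 2 + (p.2 - q.2) ^+ 2.
Proof. by rewrite /dist sqr_sqrtr // addr_ge0 ?sqr_ge0. Qed.

Lemma distC p q : dist p q = dist q p.
Proof. by rewrite /dist -sqrrN opprB -[(p.2 - q.2) ^+ 2]sqrrN opprB. Qed.

Lemma dist_gt0 p q : p != q -> 0 < dist p q.
Proof.
case: p q => [p1 p2] [q1 q2] neq_pq; rewrite sqrtr_gt0 /=.
rewrite lt_neqAle addr_ge0 ?sqr_ge0 // andbT eq_sym paddr_eq0 ?sqr_ge0 //.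
rewrite !sqrf_eq0 !subr_eq0.
by apply: contra neq_pq => /andP[/eqP -> /eqP ->]; exact: eqxx.
Qed.

Lemma norm_sub1_le_dist p q : `|p.1 - q.1| <= dist p q.
Proof. by rewrite -sqrtr_sqr ler_wsqrtr // lerDl sqr_ge0. Qed.

Lemma norm_sub2_le_dist p q : `|p.2 - q.2| <= dist p q.
Proof. by rewrite -sqrtr_sqr ler_wsqrtr // lerDr sqr_ge0. Qed.

Lemma cauchy_schwarz2 (x1 y1 x2 y2 : R) :
  x1 * x2 + y1 * y2 <=
  Num.sqrt (x1 ^+ 2 + y1 ^+ 2) * Num.sqrt (x2 ^+ 2 + y2 ^+ 2).
Proof.
rewrite -sqrtrM ?addr_ge0 ?sqr_ge0 //; apply: le_trans (ler_norm _) _.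
rewrite -sqrtr_sqr ler_wsqrtr //.
have lagrange : (x1 ^+ 2 + y1 ^+ 2) * (x2 ^+ 2 + y2 ^+ 2) =
  (x1 * x2 + y1 * y2) ^+ 2 + (x1 * y2 - x2 * y1) ^+ 2 by ring.
by rewrite lagrange lerDl sqr_ge0.
Qed.

Lemma minkowski2 (x1 y1 x2 y2 : R) :
  Num.sqrt ((x1 + x2) ^+ 2 + (y1 + y2) ^+ 2) <=
  Num.sqrt (x1 ^+ 2 + y1 ^+ 2) + Num.sqrt (x2 ^+ 2 + y2 ^+ 2).
Proof.
have cs := cauchy_schwarz2 x1 y1 x2 y2.
have aa := sqr_sqrtr (addr_ge0 (sqr_ge0 x1) (sqr_ge0 y1)).
have bb := sqr_sqrtr (addr_ge0 (sqr_ge0 x2) (sqr_ge0 y2)).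
set a := Num.sqrt _ in cs aa *; set b := Num.sqrt (x2 ^+ 2 + _) in cs bb *.
have ab_ge0 : 0 <= a + b by rewrite addr_ge0 ?sqrtr_ge0.
rewrite -(ger0_norm ab_ge0) -sqrtr_sqr ler_wsqrtr //; nra.
Qed.

Lemma dist_triangle p q r : dist p r <= dist p q + dist q r.
Proof.
rewrite /dist.
have -> : p.1 - r.1 = (p.1 - q.1) + (q.1 - r.1) by rewrite addrA subrK.
have -> : p.2 - r.2 = (p.2 - q.2) + (q.2 - r.2) by rewrite addrA subrK.
exact: minkowski2.
Qed.

End EuclideanDistance.

Section Walks.
Variables (R : realType) (V : finType) (P : V -> point R).

Lemma dist_last_le_walk_len x p : dist (P x) (P (last x p)) <= walk_len P x p.
Proof.
elim: p x => [|y p IHp] x /=; first by rewrite /dist !subrr expr0n addr0 sqrtr0.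
by apply: le_trans (dist_triangle _ (P y) _) _; rewrite lerD2l.
Qed.

Lemma dist_via_le_walk_len x v p : v \in p ->
  dist (P x) (P v) + dist (P v) (P (last x p)) <= walk_len P x p.
Proof.
elim: p x => [//|y p IHp] x /=; rewrite in_cons => /predU1P[-> | v_p].
  by rewrite lerD2l dist_last_le_walk_len.
have := IHp y v_p; have := dist_triangle (P x) (P y) (P v); lra.
Qed.

End Walks.

Lemma truncn_eq_norm_lt1 (R : realType) (a b : R) : 0 <= a -> 0 <= b ->
  Num.truncn a = Num.truncn b -> `|a - b| < 1.
Proof.
move=> a_ge0 b_ge0 eq_ab; have := truncn_itv a_ge0; have := truncn_itv b_ge0.
rewrite eq_ab -natr1 => /andP[? ?] /andP[? ?].
by rewrite ltr_norml; apply/andP; split; lra.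
Qed.

Section Grid.
Variables (R : realType) (h : R) (n : nat).
Hypothesis h_gt0 : 0 < h.

(* For [`|x| <= n * h] this is [floor (x / h) + n], which [inord] keeps. *)
Definition grid_index (x : R) : 'I_(n.*2).+1 :=
  inord (Num.truncn (x / h + n%:R)).

Definition grid_cell (c p : point R) :=
  (grid_index (p.1 - c.1), grid_index (p.2 - c.2)).

Lemma grid_index_itv x : `|x| <= n%:R * h -> 0 <= x / h + n%:R <= (n.*2)%:R.
Proof.
move=> x_le; have : `|x / h| <= n%:R.
  by rewrite normrM normfV (gtr0_norm h_gt0) ler_pdivrMr.
by rewrite ler_norml -muln2 natrM; move=> /andP[? ?]; apply/andP; split; lra.
Qed.

Lemma val_grid_index x : `|x| <= n%:R * h ->
  grid_index x = Num.truncn (x / h + n%:R) :> nat.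
Proof.
move=> /grid_index_itv /andP[_ le_2n]; rewrite inordK // ltnS.
by rewrite truncn_le_nat (le_lt_trans le_2n) // ltr_nat.
Qed.

Lemma grid_index_close x y : `|x| <= n%:R * h -> `|y| <= n%:R * h ->
  grid_index x = grid_index y -> `|x - y| < h.
Proof.
move=> x_le y_le /(congr1 val) /=; rewrite !val_grid_index // => eq_trunc.
have [/andP[x_ge0 _] /andP[y_ge0 _]] := (grid_index_itv x_le, grid_index_itv y_le).
have := truncn_eq_norm_lt1 x_ge0 y_ge0 eq_trunc.
have -> : x / h + n%:R - (y / h + n%:R) = (x - y) / h by ring.
by rewrite normrM normfV (gtr0_norm h_gt0) ltr_pdivrMr // mul1r.
Qed.

Lemma grid_cell_close c p q : dist c p <= n%:R * h -> dist c q <= n%:R * h ->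
  grid_cell c p = grid_cell c q -> dist p q < 2 * h.
Proof.
move=> p_le q_le [eq1 eq2].
have close1 : `|p.1 - q.1| < h.
  have := grid_index_close _ _ eq1; rewrite opprB addrA subrK.
  by apply; apply: le_trans (norm_sub1_le_dist _ _) _; rewrite distC.
have close2 : `|p.2 - q.2| < h.
  have := grid_index_close _ _ eq2; rewrite opprB addrA subrK.
  by apply; apply: le_trans (norm_sub2_le_dist _ _) _; rewrite distC.
have := sqr_dist p q; rewrite -[(p.1 - q.1) ^+ 2]real_normK ?num_real //.
rewrite -[(p.2 - q.2) ^+ 2]real_normK ?num_real //.
have := dist_ge0 p q; have := normr_ge0 (p.1 - q.1); have := normr_ge0 (p.2 - q.2).
nra.
Qed.

End Grid.

Section DyadicScale.
Variables (R : realType) (m : R).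
Hypothesis m_gt0 : 0 < m.

Definition dyadic_scale (x : R) : nat := trunc_log 2 (Num.truncn (x / m)).

Lemma dyadic_scale_bounds x : m <= x ->
  2 ^+ dyadic_scale x * m <= x < 2 ^+ (dyadic_scale x).+1 * m.
Proof.
move=> m_le_x; have ge1_xm : 1 <= x / m by rewrite ler_pdivlMr // mul1r.
have /andP[trunc_le trunc_lt] := truncn_itv (le_trans ler01 ge1_xm).
have /andP[] := trunc_log_bounds (p := 2) isT (etrans (truncn_gt0 _) ge1_xm).
rewrite -(ler_nat R) -(ltr_nat R) !natrX -/(dyadic_scale x) => pow_le pow_lt.
rewrite -ler_pdivlMr // -ltr_pdivrMr // (le_trans pow_le trunc_le) /=.
by apply: lt_le_trans trunc_lt _; rewrite -natrX ler_nat -(ltr_nat R) natrX.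
Qed.

Lemma dyadic_scale_le x y : x <= y -> (dyadic_scale x <= dyadic_scale y)%N.
Proof.
by move=> le_xy; apply/leq_trunc_log/le_truncn; rewrite ler_pM2r ?invr_gt0.
Qed.

End DyadicScale.

Section StarSeparatedSets.
Variables (R : realType) (T : finType) (A : {set T}).
Variables (Q : T -> point R) (c : point R) (s m M : R).
Hypotheses (s_gt0 : 0 < s) (m_gt0 : 0 < m).
Hypothesis A_annulus : forall u, u \in A -> m <= dist c (Q u) <= M.
Hypothesis A_separated : {in A &, forall u1 u2, u1 != u2 ->
  dist c (Q u1) + dist c (Q u2) <= s * dist (Q u1) (Q u2)}.

Let scale u := dyadic_scale m (dist c (Q u)).
Let cell_size u := 2 ^+ scale u * m / s.
Let n := (Num.truncn (2 * s)).+1.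

Lemma cell_size_gt0 u : 0 < cell_size u.
Proof. by rewrite !mulr_gt0 ?exprn_gt0 ?invr_gt0. Qed.

Lemma mul_cell_size u : s * cell_size u = 2 ^+ scale u * m.
Proof. by rewrite mulrC divfK ?gt_eqF. Qed.

Lemma scale_bounds u : u \in A ->
  s * cell_size u <= dist c (Q u) < 2 * s * cell_size u.
Proof.
move=> /A_annulus /andP[/(dyadic_scale_bounds m_gt0) bounds _].
by rewrite -mulrA !mul_cell_size mulrA -exprS.
Qed.

Lemma dist_le_grid_radius u : u \in A -> dist c (Q u) <= n%:R * cell_size u.
Proof.
move=> /scale_bounds /andP[_ /ltW]; move/le_trans; apply.
by rewrite ler_pM2r ?cell_size_gt0 // /n -natr1 ltW // truncnS_gt.
Qed.

Lemma separated_same_scale u1 u2 : u1 \in A -> u2 \in A -> u1 != u2 ->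
  scale u1 = scale u2 -> 2 * cell_size u1 <= dist (Q u1) (Q u2).
Proof.
move=> A_u1 A_u2 neq_u12 eq_scale.
have /andP[le1 _] := scale_bounds A_u1; have /andP[le2 _] := scale_bounds A_u2.
rewrite /cell_size -eq_scale -/(cell_size u1) in le2.
rewrite -(ler_pM2l s_gt0); have := A_separated A_u1 A_u2 neq_u12; lra.
Qed.

Lemma scale_le_max u : u \in A -> (scale u <= dyadic_scale m M)%N.
Proof. by move=> /A_annulus /andP[_]; apply: dyadic_scale_le. Qed.

Lemma card_star_separated_nat :
  (#|A| <= (dyadic_scale m M).+1 * (n.*2).+1 ^ 2)%N.
Proof.
pose f u := (inord (scale u) : 'I_(dyadic_scale m M).+1,
             grid_cell (cell_size u) n c (Q u)).
have f_inj : {in A &, injective f}.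
  move=> u1 u2 A_u1 A_u2 eq_f; apply/eqP/contraT => neq_u12.
  have [/(congr1 val) /= eq_scale eq_cell] := (congr1 fst eq_f, congr1 snd eq_f).
  rewrite !inordK ?ltnS ?scale_le_max // in eq_scale.
  have eq_size : cell_size u1 = cell_size u2 by rewrite /cell_size eq_scale.
  have radius1 := dist_le_grid_radius A_u1; rewrite eq_size in eq_cell radius1.
  have := separated_same_scale A_u1 A_u2 neq_u12 eq_scale.
  by rewrite eq_size leNgt (grid_cell_close (cell_size_gt0 u2) radius1
    (dist_le_grid_radius A_u2) eq_cell).
have := @leq_card_in _ _ f A f_inj.
by rewrite !card_prod !card_ord.
Qed.

Lemma card_star_separated :
  #|A|%:R <= (dyadic_scale m M).+1%:R * (4 * s + 3) ^+ 2.
Proof.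
have n_le : n%:R <= 2 * s + 1.
  by rewrite /n -natr1 lerD2r truncn_le; apply/ltW/mulr_gt0.
have side_le : (n.*2).+1%:R <= 4 * s + 3 by rewrite -natr1 -muln2 natrM; lra.
apply: le_trans (_ : ((dyadic_scale m M).+1 * (n.*2).+1 ^ 2)%:R <= _).
  by rewrite ler_nat card_star_separated_nat.
rewrite natrM natrX ler_pM2l ?ltr0n //; have := ler0n R (n.*2).+1; nra.
Qed.

End StarSeparatedSets.

Section EdgeLengths.
Variables (R : realType) (V : finType) (e : rel V) (P : V -> point R).

Lemma neighbor_dist_bounds v u : e v u ->
  min_edge_len e P <= dist (P v) (P u) <= max_edge_len e P.
Proof.
move=> e_vu; rewrite [dist _ _]/(edge_len P (v, u)).
by rewrite (bigmin_le_cond _ _ (j := (v, u))) ?(le_bigmax_cond _ _ (j := (v, u))).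
Qed.

Lemma min_edge_len_gt0 v u : injective P -> irreflexive e -> e v u ->
  0 < min_edge_len e P.
Proof.
move=> P_inj e_irr e_vu.
have edge_gt0 x : e x.1 x.2 -> 0 < edge_len P x.
  move=> e_x; apply: dist_gt0; rewrite (inj_eq P_inj).
  by apply: contraTneq e_x => ->; rewrite e_irr.
apply: lt_bigmin => //; apply: lt_le_trans (edge_gt0 (v, u) e_vu) _.
exact: le_bigmax_cond.
Qed.

End EdgeLengths.

Section Forests.
Variables (V : finType) (e : rel V).
Hypotheses (e_sym : symmetric e) (e_irr : irreflexive e).
Hypothesis e_acyclic : forall p : seq V, uniq p -> (3 <= size p)%N -> ~~ cycle e p.

Lemma mem_path_between_neighbors v u1 u2 p :
  e v u1 -> e v u2 -> u1 != u2 -> path e u1 p -> last u1 p = u2 -> v \in p.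
Proof.
(* Otherwise a simple u1-u2 path avoiding v closes, through v, into a cycle. *)
move=> e_vu1 e_vu2 neq_u12 e_p last_p; apply/negPn/negP => v_notin_p.
have [q [e_q uniq_q sub_qp last_q]] : exists q, [/\ path e u1 q,
    uniq (u1 :: q), {subset q <= p} & last u1 q = u2].
  by rewrite -last_p; case: (shortenP e_p) => q *; exists q.
have v_notin_q : v \notin q by apply: contra v_notin_p => /sub_qp.
have neq_vu1 : v != u1 by apply: contraTneq e_vu1 => ->; rewrite e_irr.
have q_nil : q != [::] by apply: contraNneq neq_u12 => q_nil; rewrite -last_q q_nil.
apply: (negP (e_acyclic (p := v :: u1 :: q) _ _)).
- by rewrite cons_uniq in_cons negb_or neq_vu1 v_notin_q uniq_q.
- by case: q q_nil {e_q uniq_q sub_qp last_q v_notin_q}.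
- by rewrite /= rcons_path e_vu1 e_q last_q e_sym.
Qed.

Lemma spanning_ratio_neighbors (R : realType) (P : V -> point R) (s : R)
    v u1 u2 :
  spanning_ratio_le e P s -> e v u1 -> e v u2 -> u1 != u2 ->
  dist (P v) (P u1) + dist (P v) (P u2) <= s * dist (P u1) (P u2).
Proof.
move=> span e_vu1 e_vu2 neq_u12; have [p [e_p last_p len_p]] := span _ _ neq_u12.
have v_p := mem_path_between_neighbors e_vu1 e_vu2 neq_u12 e_p last_p.
have := dist_via_le_walk_len P u1 v_p.
by rewrite last_p distC; lra.
Qed.

Lemma degree_le_dyadic_scales (R : realType) (P : V -> point R) (s : R) v u :
  injective P -> spanning_ratio_le e P s -> 0 < s -> e v u ->
  (degree e v)%:R <=
  (dyadic_scale (min_edge_len e P) (max_edge_len e P)).+1%:R * (4 * s + 3) ^+ 2.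
Proof.
move=> P_inj span s_gt0 e_vu.
apply: (card_star_separated s_gt0 (min_edge_len_gt0 P_inj e_irr e_vu)).
  by move=> w; rewrite inE; apply: neighbor_dist_bounds.
by move=> u1 u2; rewrite !inE; apply: spanning_ratio_neighbors span.
Qed.

End Forests.

Lemma exponent_lower_bound (R : realType) (s x : R) (J : nat) : 1 <= s ->
  100 <= x / s ^+ 2 -> x <= J.+1%:R * (4 * s + 3) ^+ 2 ->
  1 / 100 * x / s ^+ 2 <= J%:R.
Proof.
(* [(4 s + 3)^2 <= 49 s^2]; the threshold [100] absorbs the [+ 1] in [J.+1]. *)
move=> s_ge1 large x_le.
have s2_gt0 : 0 < s ^+ 2 by rewrite exprn_gt0 // (lt_le_trans ltr01).
have : x / s ^+ 2 <= J.+1%:R * 49.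
  rewrite ler_pdivrMr // -mulrA; apply: le_trans x_le _.
  by rewrite ler_pM2l ?ltr0n //; nra.
by rewrite -mulrA -natr1; lra.
Qed.

Theorem theorem8 (R : realType) :
  exists c : R, 0 < c /\ exists K : R,
  forall (V : finType) (e : rel V), is_tree e ->
  forall (v : V) (d : nat), degree e v = d ->
  forall s : R, 1 <= s ->
  forall P : V -> point R, straight_line_drawing P ->
  spanning_ratio_le e P s ->
  K <= d%:R / s ^+ 2 ->
  powR 2 (c * d%:R / s ^+ 2) <= edge_length_ratio e P.
Proof.
exists (1 / 100); split; first by rewrite divr_gt0.
exists 100 => V e [[e_sym e_irr] _ e_acyclic] v d deg_v s s_ge1 P P_inj span large.
have s_gt0 : 0 < s := lt_le_trans ltr01 s_ge1.
have [u e_vu] : exists u, e v u.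
  have /card_gt0P[u] : (0 < degree e v)%N.
    by rewrite deg_v; case: d large {deg_v} => //; rewrite mul0r; lra.
  by rewrite inE; exists u.
have := degree_le_dyadic_scales e_sym e_irr e_acyclic P_inj span s_gt0 e_vu.
rewrite /edge_length_ratio deg_v.
set m := min_edge_len e P; set M := max_edge_len e P.
move=> /(exponent_lower_bound s_ge1 large) exponent_le.
have m_gt0 : 0 < m := min_edge_len_gt0 P_inj e_irr e_vu.
have /andP[m_le_dist dist_le_M] := neighbor_dist_bounds P e_vu.
have /andP[pow_le _] := dyadic_scale_bounds m_gt0 (le_trans m_le_dist dist_le_M).
apply: le_trans (_ : 2 ^+ dyadic_scale m M <= _); last by rewrite ler_pdivlMr.
by rewrite -(@powR_mulrn _ 2) ?ler0n //; apply: ler_powR; rewrite ?ler1n.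
Qed.
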